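(* Let $s\geq 1$ and $t\geq 3$ be integers. Let $G$ be a bipartite graph with bipartition $A\cup B$, $|B|=n$, which contains no copy of $L'_{s,t}$ as a subgraph, and suppose that $W(A)\geq 8(s+t)^2 n$. Then the number of light edges in $W_G$ (i.e. the number of unordered pairs of distinct vertices of $A$ forming a light edge) is at least $\frac{W(A)}{4(s+t)^3}$.
   Context: For a bipartite graph $G$ with bipartition $A\cup B$, write $d_G(u,v)=|N_G(u)\cap N_G(v)|$ for $u,v\in A$, where $N_G(x)$ is the neighbourhood of $x$ in $G$. The neighbourhood graph $W_G$ is the weighted graph on $A$ where the pair $uv$ has weight $d_G(u,v)$. For $U\subseteq A$, $W(U)=\sum_{\{u,v\}\in\binom{U}{2}} d_G(u,v)$. A pair $uv$ of distinct vertices of $A$ is a light edge if $1\leq d_G(u,v)<\binom{s+t-1}{2}$ and a heavy edge if $d_G(u,v)\geq\binom{s+t-1}{2}$. The subdivision of a graph $L$ is the bipartite graph with parts $V(L)$ and $E(L)$ in which $v\in V(L)$ is adjacent to $e\in E(L)$ iff $v$ is an endpoint of $e$. $L_{s,t}$ is the graph on vertex set $S\cup T$, $S\cap T=\emptyset$, $|S|=s$, $|T|=t-1$, where distinct $x,y$ are adjacent iff $x\in T$ or $y\in T$; $L'_{s,t}$ is its subdivision. *)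

From mathcomp Require Import all_boot.
Set Implicit Arguments. Unset Strict Implicit. Unset Printing Implicit Defensive.

Definition bip_graph (VA VB : finType) (adj : VA -> VB -> bool)
    (x y : (VA + VB)%type) : bool :=
  match x, y with
  | inl a, inr b => adj a b
  | inr b, inl a => adj a b
  | _, _ => false
  end.

(* codegree of a pair of A-vertices, given as a 2-element set P:
   d_G(u,v) = |N(u) ∩ N(v)| for P = {u,v}. *)
Definition codeg (VA VB : finType) (adj : VA -> VB -> bool) (P : {set VA}) : nat :=
  #|[set b : VB | [forall u in P, adj u b]]|.

Definition Wsum (VA VB : finType) (adj : VA -> VB -> bool) : nat :=
  \sum_(P : {set VA} | #|P| == 2) codeg adj P.

Definition light_edges (s t : nat) (VA VB : finType) (adj : VA -> VB -> bool)
    : {set {set VA}} :=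
  [set P : {set VA} | (#|P| == 2) && (1 <= codeg adj P) && (codeg adj P < 'C(s + t - 1, 2))].

(* L_{s,t}: vertex set S ∪ T with |S| = s, |T| = t-1; x,y adjacent iff x ≠ y
   and (x ∈ T or y ∈ T). S = inl part, T = inr part. *)
Definition Lvert (s t : nat) : finType := ('I_s + 'I_(t - 1))%type.

Definition inT (s t : nat) (x : Lvert s t) : bool :=
  match x with inl _ => false | inr _ => true end.

Definition Ladj (s t : nat) (x y : Lvert s t) : bool :=
  (x != y) && (inT x || inT y).

Definition Ledges (s t : nat) : {set {set Lvert s t}} :=
  [set e : {set Lvert s t} | [exists x, exists y, Ladj x y && (e == [set x; y])]].

(* G contains a copy of the subdivision L'_{s,t} (vertex set V(L) ∪ E(L),
   v ~ e iff v ∈ e) as a (not necessarily induced) subgraph: an injective map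
   of V(L) ∪ E(L) into V(G) = A ∪ B sending edges of L'_{s,t} to edges of G. *)
Definition contains_Lprime (s t : nat) (VA VB : finType) (adj : VA -> VB -> bool)
    : Prop :=
  exists (f : Lvert s t -> (VA + VB)%type) (g : {set Lvert s t} -> (VA + VB)%type),
    [/\ injective f,
        {in Ledges s t &, injective g},
        (forall x e, e \in Ledges s t -> f x != g e) &
        (forall x e, e \in Ledges s t -> x \in e -> bip_graph adj (f x) (g e))].

From mathcomp Require Import all_boot.
From mathcomp Require Import zify.
Set Implicit Arguments. Unset Strict Implicit.

(* For b in B let N(b) be its neighbourhood in A, and relate u, v in A when
   u = v or the pair uv is not heavy.  If s+t-1 pairwise heavy vertices had a
   common neighbour, greedily choosing distinct common neighbours for the
   edges of L_{s,t} would embed L'_{s,t}; so no (s+t-1)-subset of N(b) is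
   unrelated, and a Turan-type bound gives
     |N(b)|^2 <= (s+t-1) * #{(u,v) in N(b)^2 : u, v related}.
   Summed over b, the left side is sum |N(b)| + 2 W(A) and the right side is
   (s+t-1) (sum |N(b)| + 2 * weight of light pairs), the latter weight being at
   most C(s+t-1,2) times the number of light edges.  Finally AM-GM gives
   2(s+t) |N(b)| <= |N(b)|^2 + (s+t)^2, and W(A) >= 8 (s+t)^2 n makes the
   sum |N(b)| terms negligible. *)

Lemma sqr_addn_leq k a e d : e ^ 2 <= k * d -> (a + e) ^ 2 <= k.+1 * (a * a + d).
Proof.
case: k => [|k] Hed.
  by move: Hed; rewrite mul0n leqn0 expn_eq0 => /andP[/eqP-> _]; lia.
have := (nat_Cauchy (k.+1 * a) e).1.
nia.
Qed.

Section DegreeSum.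
Variables (T : finType) (rr : rel T).

Definition deg_in (X : {set T}) x := #|[set y in X | rr x y]|.
Definition deg_sum (X : {set T}) := \sum_(x in X) deg_in X x.
Definition related_pair (Y : {set T}) : Prop :=
  exists x y, [/\ x \in Y, y \in Y, x != y & rr x y].

Lemma deg_sum_setD (X N : {set T}) : N \subset X ->
  \sum_(x in N) deg_in X x + deg_sum (X :\: N) <= deg_sum X.
Proof.
move=> NX; rewrite [deg_sum X](big_setID N) /= (setIidPr NX) leq_add2l.
apply: leq_sum => x _; apply: subset_leq_card; apply/subsetP => y.
by rewrite !inE => /andP[/andP[_ ->] ->].
Qed.

Lemma deg_sum_total (X : {set T}) : (forall x y, rr x y) -> deg_sum X = #|X| ^ 2.
Proof.
move=> rr_total; rewrite /deg_sum (eq_bigr (fun _ => #|X|)) ?sum_nat_const //.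
by move=> x _; apply: eq_card => y; rewrite inE rr_total andbT.
Qed.

Hypotheses (rr_refl : reflexive rr) (rr_sym : symmetric rr).

Lemma related_pair_setD_nbhd k (X : {set T}) v : v \in X ->
    (forall Y : {set T}, Y \subset X -> #|Y| = k.+1 -> related_pair Y) ->
  forall Y : {set T}, Y \subset X :\: [set y in X | rr v y] -> #|Y| = k -> related_pair Y.
Proof.
move=> vX HX Y YXN cardY.
have farY z : z \in Y -> ~~ rr v z.
  by move/(subsetP YXN); rewrite !inE => /andP[+ zX]; rewrite zX.
have vY : v \notin Y by apply: contraL (farY v) _; rewrite rr_refl.
have [x [y [+ + xy rxy]]] : related_pair (v |: Y).
  apply: HX; last by rewrite cardsU1 vY cardY.
  by rewrite subUset sub1set vX (subset_trans YXN) ?subsetDl.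
rewrite !in_setU1 => /predU1P[xv | xY] /predU1P[yv | yY].
- by move: xy; rewrite xv yv eqxx.
- by move: (farY y yY); rewrite -xv rxy.
- by move: (farY x xY); rewrite -yv rr_sym rxy.
- by exists x, y.
Qed.

Lemma sqr_card_leq_deg_sum k (X : {set T}) :
  (forall Y : {set T}, Y \subset X -> #|Y| = k -> related_pair Y) -> #|X| ^ 2 <= k * deg_sum X.
Proof.
elim: k X => [|k IH] X HX.
  by have [x [y []]] := HX set0 (sub0set _) (cards0 _); rewrite in_set0.
have [->|[x0 x0X]] := set_0Vmem X; first by rewrite cards0.
(* Removing the neighbourhood N of a vertex of minimum degree takes at least
   |N|^2 off the degree sum and lowers k by one. *)
pose v := [arg min_(v < x0 in X) deg_in X v].
have [vX vmin] : v \in X /\ forall x, x \in X -> deg_in X v <= deg_in X x.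
  by rewrite /v; case: arg_minnP.
set N := [set y in X | rr v y].
have NX : N \subset X by apply/subsetP => y; rewrite inE => /andP[].
have cardX : #|X| = #|N| + #|X :\: N| by rewrite -(cardsID N X) (setIidPr NX).
have degN : #|N| * #|N| <= \sum_(x in N) deg_in X x.
  by rewrite -sum_nat_const; apply: leq_sum => x /(subsetP NX); apply: vmin.
have := IH _ (related_pair_setD_nbhd vX HX).
rewrite cardX => /(sqr_addn_leq #|N|) /leq_trans; apply.
by rewrite leq_mul2l (leq_trans _ (deg_sum_setD NX)) ?leq_add2r ?orbT.
Qed.

End DegreeSum.

Definition pair_rel (T : finType) (p : pred {set T}) : rel T :=
  fun u v => (u == v) || p [set u; v].

Lemma pair_rel_refl (T : finType) (p : pred {set T}) : reflexive (pair_rel p).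
Proof. by move=> u; rewrite /pair_rel eqxx. Qed.

Lemma pair_rel_sym (T : finType) (p : pred {set T}) : symmetric (pair_rel p).
Proof. by move=> u v; rewrite /pair_rel eq_sym setUC. Qed.

Lemma greedy_sdr (I J : finType) (j0 : J) (S : I -> {set J}) (l : seq I) :
  uniq l -> (forall i, i \in l -> size l <= #|S i|) ->
  exists2 g : I -> J, {in l &, injective g} & forall i, i \in l -> g i \in S i.
Proof.
elim: l => [|i l IH] /=; first by exists (fun _ => j0).
case/andP=> _ ul HS.
have [g ginj gS] : exists2 g : I -> J, {in l &, injective g} & forall j, j \in l -> g j \in S j.
  by apply: IH => // j jl; apply: ltnW (HS j _); rewrite inE jl orbT.
have card_img : #|[set g j | j in l]| <= size l.
  by rewrite -(card_uniqP ul) leq_imset_card.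
have : 0 < #|S i :\: [set g j | j in l]|.
  rewrite cardsD; have := HS i (mem_head _ _).
  by have := subset_leq_card (subsetIr (S i) [set g j | j in l]); lia.
case/card_gt0P => b; rewrite inE => /andP[b_new bS].
exists (fun j => if j == i then b else g j) => [x y|j]; last first.
  by rewrite inE; case: eqP => [-> //|_ /= jl]; apply: gS.
rewrite !inE; case: (eqVneq x i) => [->|_]; case: (eqVneq y i) => [->|_] //= xl yl.
- by move=> E; rewrite E imset_f in b_new.
- by move=> E; rewrite -E imset_f in b_new.
- exact: ginj.
Qed.

Lemma forall_in_set2 (T : finType) (P : pred T) p q :
  [forall u in [set p; q], P u] = P p && P q.
Proof.
apply/forall_inP/andP => [H|[Hp Hq] u]; first by split; apply: H; rewrite !inE eqxx ?orbT.
by case/set2P => ->.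
Qed.

Lemma codeg_set2 (VA VB : finType) (adj : VA -> VB -> bool) u v :
  codeg adj [set u; v] = #|[set b | adj u b && adj v b]|.
Proof. by apply: eq_card => b; rewrite !inE forall_in_set2. Qed.

Lemma card_Ledges s t : #|Ledges s t| <= 'C(#|Lvert s t|, 2).
Proof.
rewrite -card_draws; apply: subset_leq_card; apply/subsetP => e.
rewrite !inE => /existsP[x] /existsP[y] /andP[/andP[xy _] /eqP ->].
by rewrite cards2 xy.
Qed.

Lemma contains_Lprime_of_heavy s t (VA VB : finType) (adj : VA -> VB -> bool)
    (Y : {set VA}) (b0 : VB) :
  0 < t -> #|Y| = s + t - 1 ->
  {in Y &, forall x y, x != y -> 'C(s + t - 1, 2) <= codeg adj [set x; y]} ->
  contains_Lprime s t adj.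
Proof.
move=> t_gt0 cardY heavy.
(* L_{s,t} is placed bijectively on Y, and its at most C(s+t-1,2) edges get
   distinct common neighbours of their endpoints. *)
have cardL : #|Lvert s t| = #|Y| by rewrite card_sum !card_ord cardY; lia.
pose h (x : Lvert s t) : VA := enum_val (cast_ord cardL (enum_rank x)).
have h_inj : injective h by move=> x y /enum_val_inj /cast_ord_inj /enum_rank_inj.
have hY x : h x \in Y by apply: enum_valP.
pose S (e : {set Lvert s t}) := [set b | [forall x in e, adj (h x) b]].
have [g g_inj gS] : exists2 g, {in enum (Ledges s t) &, injective g} &
    forall e, e \in enum (Ledges s t) -> g e \in S e.
  apply: (greedy_sdr b0) => [|e]; first exact: enum_uniq.
  rewrite mem_enum -cardE inE => /existsP[x] /existsP[y] /andP[/andP[xy _] /eqP ->].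
  apply: leq_trans (card_Ledges s t) _; rewrite cardL cardY.
  have -> : #|S [set x; y]| = codeg adj [set h x; h y].
    by rewrite codeg_set2; apply: eq_card => b; rewrite !inE forall_in_set2.
  by apply: heavy; rewrite ?hY ?(inj_eq h_inj).
exists (fun x => inl (h x)), (fun e => inr (g e)); split => //.
- by move=> x y [] /h_inj.
- by move=> e e' He He' [] /g_inj; apply; rewrite mem_enum.
- move=> x e He xe /=.
  by have := gS e; rewrite mem_enum => /(_ He); rewrite inE => /forall_inP; apply.
Qed.

Lemma light_pair_of_Lprime_free s t (VA VB : finType) (adj : VA -> VB -> bool)
    (b0 : VB) (Y : {set VA}) :
  0 < t -> ~ contains_Lprime s t adj -> #|Y| = s + t - 1 ->
  related_pair (pair_rel [pred P | codeg adj P < 'C(s + t - 1, 2)]) Y.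
Proof.
move=> t_gt0 noL cardY; set light := [pred P | _].
have [/exists_inP[x xY /exists_inP[y yY /andP[xy rxy]]]|no_pair] :=
  boolP [exists x in Y, exists y in Y, (x != y) && pair_rel light x y].
  by exists x, y.
case: noL; apply: (contains_Lprime_of_heavy b0 t_gt0 cardY) => x y xY yY xy.
rewrite leqNgt; apply: contra no_pair => lt_codeg; apply/exists_inP; exists x => //.
by apply/exists_inP; exists y; rewrite // xy /pair_rel inE lt_codeg orbT.
Qed.

Lemma card_set_sum (T : finType) (P : pred T) : #|[set x | P x]| = \sum_x P x.
Proof. by rewrite -sum1dep_card big_mkcond; apply: eq_bigr => x _; case: (P x). Qed.

Lemma eq_set2 (T : finType) (u v a b : T) : u != v -> a != b ->
  ([set u; v] == [set a; b]) = ((u, v) == (a, b)) || ((u, v) == (b, a)).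
Proof.
move=> uv ab; apply/eqP/orP => [E|[]/eqP[-> ->] //]; last by rewrite setUC.
move: uv; have := set21 u v; have := set22 u v; rewrite E => /set2P[]-> /set2P[]->;
  by rewrite ?eqxx //; auto.
Qed.

Lemma sum_ordered_pairs (T : finType) (F : {set T} -> nat) :
  \sum_u \sum_(v | v != u) F [set u; v] = 2 * \sum_(P : {set T} | #|P| == 2) F P.
Proof.
rewrite pair_big_dep /= (partition_big (fun p => [set p.1; p.2]) (fun P => #|P| == 2)) /=;
  last by case=> u v /= vu; rewrite cards2 (eq_sym u) vu.
rewrite big_distrr; apply: eq_bigr => _ /cards2P[a [b [ab ->]]].
rewrite (eq_bigr (fun _ => F [set a; b])) => [|p /andP[_ /eqP ->] //].
rewrite sum_nat_const; congr (_ * _).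
have -> : 2 = #|pred2 (a, b) (b, a)| by rewrite card2 xpair_eqE negb_and ab.
apply: eq_card => -[u v]; rewrite !unfold_in /=.
have [->|vu] /= := eqVneq v u; last by rewrite eq_set2 // eq_sym.
by apply/esym/negbTE; apply: contra ab => /orP[]/eqP[<- <-].
Qed.

Section CodegreeCounting.
Variables (VA VB : finType) (adj : VA -> VB -> bool).

Definition nbhd (b : VB) : {set VA} := [set a | adj a b].

Lemma sum_deg_sum_nbhd (q : rel VA) :
  \sum_b deg_sum q (nbhd b) = \sum_u \sum_v q u v * #|[set b | adj u b && adj v b]|.
Proof.
have deg_sumE b : deg_sum q (nbhd b) = \sum_u \sum_v (adj u b && adj v b && q u v).
  rewrite /deg_sum big_mkcond; apply: eq_bigr => u _; rewrite /deg_in card_set_sum inE.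
  by case: (adj u b); [apply: eq_bigr => v _; rewrite inE | rewrite big1].
under eq_bigr do rewrite deg_sumE.
rewrite exchange_big; apply: eq_bigr => u _; rewrite exchange_big; apply: eq_bigr => v _.
rewrite card_set_sum big_distrr; apply: eq_bigr => b _.
by case: (q u v) (adj u b) (adj v b) => [] [] [].
Qed.

Lemma sum_deg_sum_pair_rel (p : pred {set VA}) :
  \sum_b deg_sum (pair_rel p) (nbhd b) =
  \sum_b #|nbhd b| + 2 * \sum_(P : {set VA} | (#|P| == 2) && p P) codeg adj P.
Proof.
rewrite sum_deg_sum_nbhd.
under eq_bigr => u _ do rewrite (bigD1 u) //= /pair_rel eqxx mul1n.
rewrite big_split /=; congr (_ + _).
  under eq_bigr do rewrite card_set_sum.
  rewrite exchange_big; apply: eq_bigr => b _.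
  by rewrite card_set_sum; apply: eq_bigr => u _; rewrite andbb.
rewrite big_mkcondr -sum_ordered_pairs; apply: eq_bigr => u _; apply: eq_bigr => v vu.
by rewrite (eq_sym u) (negbTE vu) codeg_set2; case: (p [set u; v]); rewrite ?mul1n.
Qed.

Lemma sum_light_codeg_leq s t :
  \sum_(P : {set VA} | (#|P| == 2) && (codeg adj P < 'C(s + t - 1, 2))) codeg adj P <=
  'C(s + t - 1, 2) * #|light_edges s t adj|.
Proof.
rewrite -sum1_card big_distrr big_mkcond [leqRHS]big_mkcond /=.
apply: leq_sum => P _; rewrite inE; case: (#|P| == 2) => //=.
case: ltnP => //= codeg_lt; case: posnP => [-> //|_].
by rewrite muln1 ltnW.
Qed.

End CodegreeCounting.

Lemma mul2_bin2 n : 2 * 'C(n, 2) = n * n.-1.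
Proof. by elim: n => // n IH; rewrite binS bin1 mulnDr IH; case: n {IH} => //= n; nia. Qed.

Lemma weight_leq_light_count K n d w lw l :
  8 * K.+1 ^ 2 * n <= w ->
  d + 2 * w <= K * (d + 2 * lw) ->
  2 * K.+1 * d <= d + 2 * w + K.+1 ^ 2 * n ->
  2 * lw <= K * K.-1 * l ->
  w <= 4 * K.+1 ^ 3 * l.
Proof.
move=> Hw Hturan Hcauchy Hlight.
(* [Hw] and [Hcauchy] give (2K+1) d <= 17/8 w, so d is negligible in [Hturan]. *)
have Hd : (16 * K + 8) * d <= 17 * w by nia.
case: K Hw Hturan Hcauchy Hlight Hd => [|K] Hw Hturan Hcauchy Hlight Hd.
  by move: Hturan; rewrite mul0n leqn0 addn_eq0 muln_eq0 => /andP[_ /eqP ->].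
have Hw' : 2 * w <= K * d + 2 * K.+1 * lw by nia.
have : (15 * K + 48) * w <= 2 * K.+1 * (16 * K + 24) * lw by nia.
nia.
Qed.

Theorem lemma10 (s t n : nat) (VA VB : finType) (adj : VA -> VB -> bool) :
  1 <= s -> 3 <= t ->
  #|VB| = n ->
  ~ contains_Lprime s t adj ->
  8 * (s + t) ^ 2 * n <= Wsum adj ->
  Wsum adj <= 4 * (s + t) ^ 3 * #|light_edges s t adj|.
Proof.
move=> _ t_ge3 cardB noL HW.
set K := s + t - 1; have sK : s + t = K.+1 by rewrite /K; lia.
pose light := [pred P : {set VA} | codeg adj P < 'C(K, 2)].
set d := \sum_b #|nbhd adj b|.
have sum_sqr : \sum_b #|nbhd adj b| ^ 2 = d + 2 * Wsum adj.
  rewrite -(eq_bigr _ (fun b _ => @deg_sum_total _ (pair_rel predT) _ (fun u v => orbT _))).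
  by rewrite sum_deg_sum_pair_rel; congr (_ + 2 * _); apply: eq_bigl => P; rewrite andbT.
have turan : d + 2 * Wsum adj <= K * (d + 2 * \sum_(P : {set VA} | (#|P| == 2) && light P) codeg adj P).
  rewrite -sum_sqr -sum_deg_sum_pair_rel big_distrr; apply: leq_sum => b _.
  apply: (sqr_card_leq_deg_sum (pair_rel_refl light) (pair_rel_sym light)) => Y _.
  exact/(light_pair_of_Lprime_free b (ltnW (ltnW t_ge3)) noL).
have cauchy : 2 * K.+1 * d <= d + 2 * Wsum adj + K.+1 ^ 2 * n.
  rewrite -sum_sqr -cardB (mulnC _ #|VB|) -sum_nat_const big_distrr -big_split; apply: leq_sum => b _.
  by rewrite /= -mulnA addnC (nat_Cauchy _ _).1.
rewrite sK in HW *; apply: weight_leq_light_count HW turan cauchy _.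
by rewrite -mul2_bin2 -mulnA leq_mul2l sum_light_codeg_leq.
Qed.
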